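(* Suppose $\frac1{\sqrt5}<a<\frac{\sqrt{105}-5}{10}$. Then for all integers $n\ge2$, \[ (3a-5a^3+2a^{2n+1})n+3a^{2n+1}-3a\ge0 \] and \[ (-3+30a^2-35a^4+8a^{2n+2})n^2+(3-35a^4+32a^{2n+2})n+30a^{2n+2}-30a^2\ge0. \] *)

From Stdlib Require Export Reals Lra Lia.

(* With b = a^2 and t = a^(2n) >= 0, both expressions are polynomials in
   b, t and n whose t-terms are nonnegative.  The remaining t-free parts are
   handled by writing n = 2 + (n - 2): the coefficients of n - 2 are positive
   and the values at n = 2, namely 3 - 10 b and -6 + 90 b - 210 b^2, are
   positive as soon as 1/5 < b < 3/10. *)
From Stdlib Require Import Reals Lra.
Open Scope R_scope.

Lemma sqr_gt_inv5 (a : R) : 1 / sqrt 5 < a -> 0 < a /\ 1 / 5 < a ^ 2.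
Proof.
  intros ha.
  assert (h5 : 0 < sqrt 5) by (apply sqrt_lt_R0; lra).
  assert (h5s : sqrt 5 * sqrt 5 = 5) by (apply sqrt_sqrt; lra).
  assert (ha5 : 1 < a * sqrt 5).
  { apply (Rmult_lt_compat_r (sqrt 5)) in ha; [|exact h5].
    replace (1 / sqrt 5 * sqrt 5) with 1 in ha by (field; lra). exact ha. }
  split; nra.
Qed.

Lemma sqr_lt_3_10 (a : R) : 0 < a -> a < (sqrt 105 - 5) / 10 -> a ^ 2 < 3 / 10.
Proof.
  intros ha0 ha.
  assert (h105 : 0 <= sqrt 105) by apply sqrt_pos.
  assert (h105s : sqrt 105 * sqrt 105 = 105) by (apply sqrt_sqrt; lra).
  assert (sqrt 105 < 41 / 4) by nra.
  nra.
Qed.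

Lemma first_factor_nonneg (b t N : R) :
  b <= 3 / 10 -> 0 <= t -> 2 <= N ->
  0 <= (3 - 5 * b) * N - 3 + t * (2 * N + 3).
Proof.
  intros hb ht hN.
  assert (0 <= (3 - 5 * b) * (N - 2)) by nra.
  assert (0 <= t * (2 * N + 3)) by nra.
  nra.
Qed.

Lemma second_t_free_nonneg (b N : R) :
  1 / 5 < b -> b < 3 / 10 -> 2 <= N ->
  0 <= (-3 + 30 * b - 35 * b ^ 2) * N ^ 2 + (3 - 35 * b ^ 2) * N - 30 * b.
Proof.
  intros hb1 hb2 hN.
  assert (hc : 0 < -3 + 30 * b - 35 * b ^ 2) by nra.
  assert (h2 : 0 < -6 + 90 * b - 210 * b ^ 2) by nra.
  assert (hslope : 0 < (-3 + 30 * b - 35 * b ^ 2) * (N + 2) + 3 - 35 * b ^ 2)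
    by nra.
  assert (0 <= (N - 2) * ((-3 + 30 * b - 35 * b ^ 2) * (N + 2) + 3 - 35 * b ^ 2))
    by nra.
  nra.
Qed.

Lemma second_poly_nonneg (b s N : R) :
  1 / 5 < b -> b < 3 / 10 -> 0 <= s -> 2 <= N ->
  0 <= (-3 + 30 * b - 35 * b ^ 2 + 8 * s) * N ^ 2
       + (3 - 35 * b ^ 2 + 32 * s) * N + 30 * s - 30 * b.
Proof.
  intros hb1 hb2 hs hN.
  pose proof (second_t_free_nonneg b N hb1 hb2 hN).
  assert (0 <= s * (8 * N ^ 2 + 32 * N + 30)) by nra.
  nra.
Qed.

Theorem lemma4p4 (a : R) (n : nat)
  (ha1 : 1 / sqrt 5 < a) (ha2 : a < (sqrt 105 - 5) / 10) (hn : (2 <= n)%nat) :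
  (3 * a - 5 * a ^ 3 + 2 * a ^ (2 * n + 1)) * INR n
    + 3 * a ^ (2 * n + 1) - 3 * a >= 0
  /\
  (-3 + 30 * a ^ 2 - 35 * a ^ 4 + 8 * a ^ (2 * n + 2)) * INR n ^ 2
    + (3 - 35 * a ^ 4 + 32 * a ^ (2 * n + 2)) * INR n
    + 30 * a ^ (2 * n + 2) - 30 * a ^ 2 >= 0.
Proof.
  destruct (sqr_gt_inv5 a ha1) as [ha0 hb1].
  pose proof (sqr_lt_3_10 a ha0 ha2) as hb2.
  assert (hN : 2 <= INR n) by exact (le_INR 2 n hn).
  assert (ht : 0 <= a ^ (2 * n)) by (rewrite pow_mult; apply pow_le; nra).
  rewrite !pow_add.
  replace (a ^ 3) with (a * a ^ 2) by ring.
  replace (a ^ 4) with ((a ^ 2) ^ 2) by ring.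
  split.
  - pose proof (first_factor_nonneg (a ^ 2) (a ^ (2 * n)) (INR n)
      ltac:(lra) ht hN).
    nra.
  - pose proof (second_poly_nonneg (a ^ 2) (a ^ (2 * n) * a ^ 2) (INR n)
      hb1 hb2 ltac:(nra) hN).
    nra.
Qed.
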